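(* Suppose that the limit $c_1:=\lim_{n\to\infty}E_n(F_1(n))/n$ exists and $c_1\in(0,1)$. Then for every sequence of positive numbers $(\lambda_n)_{n\ge1}$ with $\lambda_n/n\to1$, $$\lim_{L\to\infty}\limsup_{n\to\infty}\frac1n\sum_{k\in M_n^{Lc}}\big(\lambda_n p_{kn}+(\lambda_n p_{kn})^2\big)e^{-\lambda_n p_{kn}}=0,$$ where $M_n^{Lc}=\{k\ge1: np_{kn}>L\}$. In particular, for every such sequence $(\lambda_n)$ and every $\varepsilon>0$, $$\lim_{n\to\infty}\frac{1}{s_n^2}\sum_{k=1}^\infty(\lambda_n p_{kn})^2e^{-\lambda_n p_{kn}}\,I_{\{\lambda_n p_{kn}>\varepsilon s_n^2/a(s_n^2)\}}=0.$$
   Context: For each $n\ge1$, $P_n$ is a probability measure (expectation $E_n$) and $p_n=(p_{kn})_{k\ge1}$ is a probability vector. Under $P_n$ a sample of size $n$ is drawn i.i.d. from countably many species, species $k$ with probability $p_{kn}$; $X_k(n)$ is the number of times species $k$ appears, and $F_1(n)=\#\{k: X_k(n)=1\}$. For $\lambda>0$, $s_{\lambda n}^2=\sum_{k\ge1}\big(\lambda p_{kn}+(\lambda p_{kn})^2\big)e^{-\lambda p_{kn}}$ and $s_n^2=s_{nn}^2$. The function $a:[0,\infty)\to[1,\infty)$ satisfies $a(t)/\sqrt t\to\infty$ and $a(t)/t\to0$ as $t\to\infty$. *)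

From HB Require Import structures.
From mathcomp Require Import all_boot all_order all_algebra.
From mathcomp Require Import all_classical all_reals all_analysis.
Set Implicit Arguments. Unset Strict Implicit. Unset Printing Implicit Defensive.
Import Order.TTheory GRing.Theory Num.Theory.
Local Open Scope ring_scope.
Local Open Scope classical_set_scope.

(* p n k = p_{kn}: probability of species k (species indexed by k : nat,
   i.e. species "k+1" of the paper) in the n-th model. *)

Definition F1 (s : seq nat) : nat :=
  count (fun k => count_mem k s == 1)%N (undup s).

(* E_n(F_1(n)): expectation of F_1 under P_n, where the sample of size n is
   drawn i.i.d. from p n; the law of the ordered sample s : n.-tuple nat is
   P_n(s) = prod_i p_{s_i, n}. *)
Definition EF1 {R : realType} (p : nat -> nat -> R) (n : nat) : \bar R :=
  \esum_(s in [set: n.-tuple nat]) ((\prod_(x <- s) p n x) * (F1 s)%:R)%:E.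

Definition phi {R : realType} (x : R) : R := (x + x ^+ 2) * expR (- x).

Definition s2 {R : realType} (p : nat -> nat -> R) (lam : R) (n : nat) : \bar R :=
  \esum_(k in [set: nat]) (phi (lam * p n k))%:E.

Definition sn2 {R : realType} (p : nat -> nat -> R) (n : nat) : \bar R :=
  s2 p n%:R n.

From HB Require Import structures.
From mathcomp Require Import all_boot all_order all_algebra.
From mathcomp Require Import all_classical all_reals all_analysis.
From mathcomp Require Import ring lra.
Import Order.TTheory GRing.Theory Num.Theory.
Local Open Scope ring_scope.
Local Open Scope classical_set_scope.

(* Both limits rest on a Markov-type bound: the summands are at most 4 and the
   species counted satisfy n p_{kn} > L (resp. lam_n p_{kn} > eps s_n^2 / a(s_n^2)),
   so their number is at most n / L (resp. lam_n a(s_n^2) / (eps s_n^2)).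
   The second limit also needs s_n^2 to grow linearly: species k is a singleton
   with probability n p (1 - p)^(n-1) <= e phi(n p), hence E_n F_1(n) <= e s_n^2,
   while E_n F_1(n) / n -> c_1 > 0.  As lam_n <= 2n eventually, the normalised sum
   is O(a(s_n^2) / s_n^2), which tends to 0. *)

Section phi_bounds.
Context {R : realType}.
Implicit Type x : R.

Lemma phi_ge0 x : 0 <= x -> 0 <= phi x.
Proof. by move=> x0; rewrite /phi mulr_ge0 ?expR_ge0 // addr_ge0 // sqr_ge0. Qed.

Lemma phi_le4 x : 0 <= x -> phi x <= 4.
Proof.
move=> x0; rewrite /phi expRN ler_pdivrMr ?expR_gt0 // mulrC.
have := expR_ge1Dx x; have := @expR_ge1Dxn R x 1 x0.
rewrite [(2`!)%:R]/= (_ : 2%:R = 2 :> R) //; nra.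
Qed.

Lemma phi_le_id x : 0 <= x -> phi x <= x.
Proof.
move=> x0; rewrite /phi expRN ler_pdivrMr ?expR_gt0 //.
have := expR_ge1Dx x; nra.
Qed.

Lemma mulr_expRN_le_phi x : 0 <= x -> x * expR (- x) <= phi x.
Proof. by move=> x0; rewrite /phi ler_wpM2r ?expR_ge0 // lerDl sqr_ge0. Qed.

Lemma sqr_expRN_le_phi x : 0 <= x -> x ^+ 2 * expR (- x) <= phi x.
Proof. by move=> x0; rewrite /phi ler_wpM2r ?expR_ge0 // lerDr. Qed.

(* The left-hand side is the probability that a species of mass q is drawn
   exactly once in n draws. *)
Lemma binomial1_le_phi (q : R) n : 0 <= q -> q <= 1 ->
  n%:R * q * (1 - q) ^+ n.-1 <= expR 1 * phi (n%:R * q).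
Proof.
move=> q0 q1; case: n => [|m]; first by rewrite !mul0r /phi add0r expr0n mul0r mulr0.
rewrite /=; set x := m.+1%:R * q.
have x0 : 0 <= x by rewrite mulr_ge0.
have one_sub_le : (1 - q) ^+ m <= expR (- q) ^+ m.
  apply: lerXn2r; rewrite ?nnegrE ?subr_ge0 ?expR_ge0 //.
  by have := expR_ge1Dx (- q); rewrite addrC.
have expR_split : expR (- q) ^+ m = expR (- x) * expR q.
  by rewrite /x -mulrN expRM_natl exprS mulrAC -expRD addNr expR0 mul1r.
have expR_q_le : expR q <= expR 1 by rewrite ler_expR.
rewrite -/x; apply: (le_trans (ler_wpM2l x0 one_sub_le)).
rewrite expR_split mulrA mulrC ler_pM ?mulr_ge0 ?expR_ge0 //.
exact: mulr_expRN_le_phi.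
Qed.

End phi_bounds.

Section esum_nonneg.
Context {R : realType}.
Local Open Scope ereal_scope.

Lemma esumZl (T : choiceType) (I : set T) (r : R) (f : T -> \bar R) :
  (0 <= r)%R -> (forall t, 0 <= f t) ->
  \esum_(i in I) (r%:E * f i) = r%:E * \esum_(i in I) f i.
Proof.
move=> r0 f0; rewrite /esum -ereal_supZl //; last first.
  by apply/set0P; exists 0; exists set0; [exact: fsets_set0 | rewrite fsbig_set0].
congr ereal_sup; apply/seteqP; split => [_ [A IA <-] | _ [_ [A IA <-] <-]].
  by exists (\sum_(i \in A) f i)%R; [exists A | rewrite ge0_mule_fsumr].
by exists A; rewrite ?ge0_mule_fsumr.
Qed.

Lemma le_esum_subset (T : choiceType) (I J : set T) (f : T -> \bar R) :
  I `<=` J -> (forall t, J t -> 0 <= f t) ->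
  \esum_(i in I) f i <= \esum_(i in J) f i.
Proof.
move=> IJ f0; rewrite esum_mkcond [leRHS]esum_mkcond; apply: le_esum => t _.
case: ifPn => [/set_mem/IJ/mem_set -> // | _]; case: ifPn => // /set_mem; exact: f0.
Qed.

Lemma esum_swap (T1 T2 : choiceType) (g : T1 -> T2 -> \bar R) :
  (forall i j, 0 <= g i j) ->
  \esum_(i in [set: T1]) \esum_(j in [set: T2]) g i j =
  \esum_(j in [set: T2]) \esum_(i in [set: T1]) g i j.
Proof.
move=> g0; rewrite !esum_esum //.
rewrite (reindex_esum ([set: T2] `*`` (fun=> [set: T1])) _ (fun x => (x.2, x.1))) //.
split => //= [[i1 i2] [j1 j2] _ _ [-> ->] // | [i1 i2] _]; by exists (i2, i1).
Qed.

Lemma esum_tuple_cons (T : choiceType) n (F : n.+1.-tuple T -> \bar R) :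
  (forall s, 0 <= F s) ->
  \esum_(s in [set: n.+1.-tuple T]) F s =
  \esum_(x in [set: T]) \esum_(t in [set: n.-tuple T]) F (cons_tuple x t).
Proof.
move=> F0; rewrite esum_esum; last by move=> *; exact: F0.
rewrite (reindex_esum ([set: T] `*`` (fun=> [set: n.-tuple T])) [set: n.+1.-tuple T]
  (fun z => cons_tuple z.1 z.2)) //.
split => [z // | [x t] [y u] _ _ /(congr1 val) [-> /val_inj ->] // | s _].
by exists (thead s, behead_tuple s) => //; apply: val_inj; rewrite /= [in RHS](tuple_eta s).
Qed.

(* Markov's inequality: on the summation range, [c * q k / t] exceeds 1. *)
Lemma esum_markov (T : choiceType) (q f : T -> R) (c t B : R) :
  (0 < t)%R -> (0 <= B)%R -> (0 <= c)%R -> (forall k, 0 <= q k)%R ->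
  (forall k, f k <= B)%R -> \esum_(k in [set: T]) (q k)%:E = 1 ->
  \esum_(k in [set k | (t < c * q k)%R]) (f k)%:E <= (B * c / t)%:E.
Proof.
move=> t0 B0 c0 q0 fB q1.
apply: (@le_trans _ _ (\esum_(k in [set k | (t < c * q k)%R]) ((B * c / t)%:E * (q k)%:E))).
  apply: le_esum => k /= /ltW tcq; rewrite -EFinM lee_fin (le_trans (fB k)) //.
  rewrite (_ : B * c / t * q k = B * (c * q k / t))%R; last by ring.
  by rewrite ler_peMr // ler_pdivlMr // mul1r.
have Bct0 : (0 <= B * c / t)%R by rewrite divr_ge0 ?mulr_ge0 // ltW.
rewrite esumZl // -[leRHS]mule1 lee_wpmul2l ?lee_fin // -q1.
by rewrite le_esum_subset // => k _; rewrite lee_fin.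
Qed.

End esum_nonneg.

Lemma limn_esup_le (R : realType) (u : (\bar R)^nat) (b : \bar R) :
  (forall n, u n <= b)%E -> (limn_esup u <= b)%E.
Proof.
move=> ub; apply: (@le_trans _ _ (ereal_sup (range u))).
  by apply: ereal_inf_lbound; exists setT => //; exact: filterT.
by apply: ge_ereal_sup => _ [n _ <-].
Qed.

Lemma large_species_cvg0 (R : realType) (p : nat -> nat -> R) (lam : nat -> R) :
  (forall n k, 0 <= p n k) ->
  (forall n, (0 < n)%N -> (\esum_(k in [set: nat]) (p n k)%:E = 1)%E) ->
  (forall n, 0 < lam n) ->
  (fun L : R => limn_esup (fun n =>
        ((n%:R^-1)%:E *
         \esum_(k in [set k | (n%:R * p n k > L)%R]) (phi (lam n * p n k))%:E)%E))
       @ +oo --> (0%R)%:E.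
Proof.
move=> p_ge0 p_sum1 lam_pos.
set u := fun L n => ((n%:R^-1)%:E *
  \esum_(k in [set k | (n%:R * p n k > L)%R]) (phi (lam n * p n k))%:E)%E.
have u_ge0 L n : (0 <= u L n)%E.
  rewrite mule_ge0 ?lee_fin ?invr_ge0 // esum_ge0 // => k _.
  by rewrite lee_fin phi_ge0 // mulr_ge0 // ltW.
have u_le L n : 0 < L -> (u L n <= (4 / L)%:E)%E.
  move=> L0; case: n => [|n]; first by rewrite /u invr0 mul0e lee_fin divr_ge0 // ltW.
  rewrite /u -[4 / L](@mulKf _ n.+1%:R) ?pnatr_eq0 // EFinM.
  apply: lee_wpmul2l; first by rewrite lee_fin invr_ge0.
  rewrite mulrCA mulrA; apply: esum_markov => //; last exact: p_sum1.
  by move=> k; rewrite phi_le4 // mulr_ge0 // ltW.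
have inv_cvg0 : (fun L : R => (4 / L)%:E) @ +oo --> (0%R)%:E.
  apply: cvg_EFin; first exact: nearW.
  rewrite -(mulr0 4); apply: cvgMl_tmp; apply/gtr0_cvgV0; last exact: cvg_id.
  by near=> L.
apply: (squeeze_cvge _ (cvg_cst _) inv_cvg0).
near=> L; have L0 : 0 < L by near: L; apply: nbhs_pinfty_gt; rewrite num_real.
rewrite limf_esup_ge0 //=; last exact: u_ge0.
by apply: limn_esup_le => n; exact: u_le.
Unshelve. all: by end_near. Qed.

Section occupancy.
Context {R : realType} (q : nat -> R) (k : nat).
Hypotheses (q_ge0 : forall j, 0 <= q j)
  (q_sum1 : (\esum_(j in [set: nat]) (q j)%:E = 1)%E).

Lemma mass_le1 : q k <= 1.
Proof.
rewrite -lee_fin -q_sum1 -(@esum_set1 _ _ k (fun j => (q j)%:E)) ?lee_fin //.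
by apply: le_esum_subset => // j _; rewrite lee_fin.
Qed.

Lemma esum_setC1 : (\esum_(j in ~` [set k]) (q j)%:E = (1 - q k)%:E)%E.
Proof.
have := esumID [set k] [set: nat] (fun j => (q j)%:E) (fun j _ => q_ge0 j).
rewrite q_sum1 !setTI esum_set1 ?lee_fin //.
set r := (\esum_(j in ~` [set k]) (q j)%:E)%E => q_split.
have r_fin : r \is a fin_num.
  rewrite ge0_fin_numE ?esum_ge0 // => [|j _]; last by rewrite lee_fin.
  by rewrite (@le_lt_trans _ _ 1%E) ?ltry // -q_sum1 le_esum_subset // => j _; rewrite lee_fin.
move: q_split; rewrite -(fineK r_fin) -EFinD => -[->]; congr EFin; ring.
Qed.

Lemma esum_mass_le_split (H : nat -> \bar R) (b1 b2 : R) :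
  (forall j, 0 <= H j)%E -> (H k <= b1%:E)%E -> 0 <= b2 ->
  (forall j, j != k -> H j <= b2%:E)%E ->
  (\esum_(j in [set: nat]) ((q j)%:E * H j) <= (q k * b1 + (1 - q k) * b2)%:E)%E.
Proof.
move=> H0 Hk b20 Hj.
rewrite (esumID [set k]); last by move=> j _; rewrite mule_ge0 // lee_fin.
rewrite !setTI esum_set1 ?mule_ge0 ?lee_fin // EFinD EFinM.
apply: leeD; first by rewrite lee_wpmul2l ?lee_fin.
apply: (@le_trans _ _ (\esum_(j in ~` [set k]) (b2%:E * (q j)%:E))%E).
  apply: le_esum => j /eqP jk; rewrite muleC lee_wpmul2r ?lee_fin //; exact: Hj.
by rewrite esumZl // esum_setC1 -EFinM mulrC.
Qed.

Definition occupancy n c : \bar R := \esum_(t in [set: n.-tuple nat])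
  ((\prod_(x <- t) q x) * (count_mem k t == c)%:R)%:E.

Lemma occupancyS_le n c : (occupancy n.+1 c <= \esum_(x in [set: nat]) ((q x)%:E *
   \esum_(t in [set: n.-tuple nat])
     ((\prod_(y <- t) q y) * (((x == k) + count_mem k t)%N == c)%:R)%:E))%E.
Proof.
rewrite /occupancy esum_tuple_cons; last by move=> s; rewrite lee_fin mulr_ge0 ?prodr_ge0.
apply: le_esum => x _; rewrite -esumZl //; last by move=> t; rewrite lee_fin mulr_ge0 ?prodr_ge0.
by apply: le_esum => t _; rewrite -EFinM lee_fin /= big_cons mulrA.
Qed.

Lemma occupancy_le n : (occupancy n 0%N <= ((1 - q k) ^+ n)%:E)%E /\
  (occupancy n 1%N <= (n%:R * q k * (1 - q k) ^+ n.-1)%:E)%E.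
Proof.
have qk0 : 0 <= 1 - q k by rewrite subr_ge0 mass_le1.
elim: n => [|n [IH0 IH1]].
  rewrite /occupancy (_ : [set: 0.-tuple nat] = [set [tuple]]); last first.
    by apply/seteqP; split => t //= _; rewrite (tuple0 t).
  by rewrite !esum_set1 ?lee_fin /= ?big_nil ?mul1r ?mul0r.
have inner_ge0 c x : (0 <= \esum_(t in [set: n.-tuple nat])
    ((\prod_(y <- t) q y) * (((x == k) + count_mem k t)%N == c)%:R)%:E)%E.
  by apply: esum_ge0 => t _; rewrite lee_fin mulr_ge0 ?prodr_ge0.
split.
  apply: (le_trans (occupancyS_le n 0)).
  apply: (le_trans (esum_mass_le_split _ 0 ((1 - q k) ^+ n) (inner_ge0 0%N) _ _ _)).
  - by rewrite eqxx esum1 // => t _; rewrite /= mulr0.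
  - exact: exprn_ge0.
  - by move=> x /negPf ->.
  - by rewrite exprS mulr0 add0r.
apply: (le_trans (occupancyS_le n 1)).
apply: (le_trans (esum_mass_le_split _ ((1 - q k) ^+ n)
  (n%:R * q k * (1 - q k) ^+ n.-1) (inner_ge0 1%N) _ _ _)).
- by rewrite eqxx.
- by rewrite !mulr_ge0 ?exprn_ge0.
- by move=> x /negPf ->.
- rewrite lee_fin le_eqVlt; apply/orP; left; apply/eqP.
  case: n {IH0 IH1 inner_ge0} => [|n]; first by rewrite /= !expr0; ring.
  by rewrite /= exprS -!natr1; ring.
Qed.

End occupancy.

Lemma F1_le_sum (s : seq nat) (M : nat) : (forall x, x \in s -> x < M)%N ->
  (F1 s <= \sum_(0 <= k < M) (count_mem k s == 1))%N.
Proof.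
move=> sM; rewrite /F1.
have perm_undup : perm_eq (undup s) [seq x <- iota 0 M | x \in s].
  apply: uniq_perm; rewrite ?undup_uniq ?filter_uniq ?iota_uniq // => x.
  rewrite mem_undup mem_filter mem_iota /= add0n.
  by case xs: (x \in s) => //=; rewrite sM.
rewrite (permP perm_undup) count_filter -sum1_count big_mkcond /=.
rewrite /index_iota subn0; apply: leq_sum => i _.
by case: (count_mem i s == 1); case: (i \in s).
Qed.

Section expected_singletons.
Context {R : realType} (p : nat -> nat -> R) (n : nat).
Hypotheses (p_ge0 : forall k, 0 <= p n k)
  (p_sum1 : (\esum_(k in [set: nat]) (p n k)%:E = 1)%E).

Lemma F1_le_esum_singletons (s : n.-tuple nat) :
  (((\prod_(x <- s) p n x) * (F1 s)%:R)%:E <=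
   \esum_(k in [set: nat]) ((\prod_(x <- s) p n x) * (count_mem k s == 1)%:R)%:E)%E.
Proof.
have P0 : 0 <= \prod_(x <- s) p n x by apply: prodr_ge0.
rewrite -nneseries_esumT; last by move=> k; rewrite lee_fin mulr_ge0.
set M := (\max_(x <- s) x).+1.
apply: (le_trans _ (@nneseries_lim_ge _ _ xpredT 0%N M _)); last first.
  by move=> k _ _; rewrite lee_fin mulr_ge0.
rewrite sumEFin lee_fin -mulr_sumr ler_wpM2l // -natr_sum ler_nat.
apply: F1_le_sum => x xs.
by rewrite ltnS /M; apply: (@leq_bigmax_seq _ _ xpredT id).
Qed.

Lemma EF1_le_sn2 : (EF1 p n <= (expR 1)%:E * sn2 p n)%E.
Proof.
apply: (le_trans (le_esum (fun s _ => F1_le_esum_singletons s))).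
rewrite esum_swap; last by move=> s k; rewrite lee_fin mulr_ge0 // prodr_ge0.
rewrite /sn2 /s2 -esumZl ?expR_ge0 //; last by move=> k; rewrite lee_fin phi_ge0 // mulr_ge0.
apply: le_esum => k _; rewrite -EFinM.
apply: le_trans (occupancy_le (p n) k p_ge0 p_sum1 n).2 _.
by rewrite lee_fin binomial1_le_phi // mass_le1.
Qed.

Lemma sn2_le : (sn2 p n <= n%:R%:E)%E.
Proof.
apply: (@le_trans _ _ (\esum_(k in [set: nat]) (n%:R%:E * (p n k)%:E))%E).
  by apply: le_esum => k _; rewrite -EFinM lee_fin phi_le_id // mulr_ge0.
by rewrite esumZl // p_sum1 mule1.
Qed.

End expected_singletons.

Lemma cvg_ratio1_le2n (R : realType) (u : nat -> R) :
  (fun n => u n / n%:R) @ \oo --> (1 : R^o) -> \forall n \near \oo, u n <= 2 * n%:R.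
Proof.
move=> /cvgrPdist_lt /(_ 1 ltr01) u_near; near=> n.
have n0 : (0 < n)%N by near: n; exact: nbhs_infty_gt.
have : `|1 - u n / n%:R| < 1 by near: n.
rewrite -ler_pdivrMr ?ltr0n // => dist_lt; apply: ltW.
by have := ler_norm (u n / n%:R - 1); rewrite distrC in dist_lt; lra.
Unshelve. all: by end_near. Qed.

Section linear_variance.
Context {R : realType} (p : nat -> nat -> R) (c1 : R).
Hypotheses (p_ge0 : forall n k, 0 <= p n k)
  (p_sum1 : forall n, (0 < n)%N -> (\esum_(k in [set: nat]) (p n k)%:E = 1)%E)
  (c1_lim : (fun n => (EF1 p n * (n%:R^-1)%:E)%E) @ \oo --> c1%:E)
  (c1_pos : 0 < c1).

Lemma sn2_fin n : (0 < n)%N -> sn2 p n \is a fin_num.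
Proof.
move=> n0; rewrite ge0_fin_numE.
  by rewrite (le_lt_trans (sn2_le p n (p_ge0 n) (p_sum1 n n0))) ?ltry.
by apply: esum_ge0 => k _; rewrite lee_fin phi_ge0 // mulr_ge0.
Qed.

Lemma sn2_ge_linear :
  \forall n \near \oo, c1 / (2 * expR 1) * n%:R <= fine (sn2 p n).
Proof.
have /fine_cvgP [EF1_fin /cvgrPdist_lt EF1_cvg] := c1_lim.
have c1_half : 0 < c1 / 2 by rewrite divr_gt0.
near=> n.
have n0 : (0 < n)%N by near: n; exact: nbhs_infty_gt.
set f := (EF1 p n * (n%:R^-1)%:E)%E.
have f_fin : f \is a fin_num by rewrite /f; near: n.
have f_gt : c1 / 2 < fine f.
  have : `|c1 - fine f| < c1 / 2 by rewrite /f; near: n; exact: EF1_cvg.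
  by have := ler_norm (c1 - fine f); lra.
have f_le : fine f <= expR 1 * fine (sn2 p n) / n%:R.
  rewrite -lee_fin fineK // /f !EFinM (fineK (sn2_fin n n0)).
  rewrite lee_wpmul2r ?lee_fin ?invr_ge0 //.
  exact: le_trans (EF1_le_sn2 p n (p_ge0 n) (p_sum1 n n0)) _.
rewrite mulrC mulrA ler_pdivrMr ?mulr_gt0 ?expR_gt0 //.
have n_ge0 : 0 <= n%:R :> R by [].
by move: f_le; rewrite ler_pdivlMr ?ltr0n //; nra.
Unshelve. all: by end_near. Qed.

End linear_variance.

Lemma lindeberg_cvg0 (R : realType) (p : nat -> nat -> R) (a : R -> R)
    (lam : nat -> R) (kap eps : R) :
  (forall n k, 0 <= p n k) ->
  (forall n, (0 < n)%N -> (\esum_(k in [set: nat]) (p n k)%:E = 1)%E) ->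
  (forall t, 0 <= t -> 1 <= a t) -> (fun t => a t / t) @ +oo --> 0 ->
  (forall n, 0 < lam n) -> 0 < kap -> 0 < eps ->
  (\forall n \near \oo, lam n <= 2 * n%:R) ->
  (\forall n \near \oo, kap * n%:R <= fine (sn2 p n)) ->
  (fun n =>
     let s := fine (sn2 p n) in
     ((s^-1)%:E *
      \esum_(k in [set k | (lam n * p n k > eps * s / a s)%R])
         ((lam n * p n k) ^+ 2 * expR (- (lam n * p n k)))%:E)%E)
  @ \oo --> (0%R)%:E.
Proof.
move=> p_ge0 p_sum1 a_ge1 a_lin lam_pos kap0 eps0 lam_le s_ge.
set s := fun n => fine (sn2 p n).
have s_oo : s @ \oo --> +oo.
  apply/cvgryPge => A; near=> n; apply: (@le_trans _ _ (kap * n%:R)); last by near: n.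
  by rewrite -ler_pdivrMl //; near: n; exact: nbhs_infty_ger.
have a_s_cvg0 : (fun n => a (s n) / s n) @ \oo --> 0 := cvg_comp _ _ s_oo a_lin.
set C := 8 / (eps * kap).
apply: (@squeeze_cvge _ _ _ _ (fun=> 0%E) _ (fun n => (C * (a (s n) / s n))%:E)); last first.
- apply: cvg_EFin; first exact: nearW.
  by rewrite -(mulr0 C); exact: cvgMl_tmp.
- exact: cvg_cst.
near=> n.
have n0 : (0 < n)%N by near: n; exact: nbhs_infty_gt.
have ks : kap * n%:R <= s n by near: n.
have ln : lam n <= 2 * n%:R by near: n.
have s0 : 0 < s n by apply: lt_le_trans ks; rewrite mulr_gt0 // ltr0n.
have a1 : 1 <= a (s n) by apply: a_ge1; exact: ltW.
have t0 : 0 < eps * s n / a (s n) by rewrite !mulr_gt0 ?invr_gt0 //; lra.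
rewrite /= -/(s n); apply/andP; split.
  apply: mule_ge0; first by rewrite lee_fin invr_ge0 ltW.
  by apply: esum_ge0 => k _; rewrite lee_fin mulr_ge0 ?sqr_ge0 ?expR_ge0.
apply: (@le_trans _ _ (((s n)^-1)%:E * (4 * lam n / (eps * s n / a (s n)))%:E)%E).
  apply: lee_wpmul2l; first by rewrite lee_fin invr_ge0 ltW.
  apply: esum_markov; rewrite ?ltW //; last exact: p_sum1.
  move=> k; have lp0 := mulr_ge0 (ltW (lam_pos n)) (p_ge0 n k).
  exact: le_trans (sqr_expRN_le_phi _ lp0) (phi_le4 _ lp0).
have lam_kap : lam n / (2 * s n) <= kap^-1.
  by rewrite ler_pdivrMr ?mulr_gt0 // ler_pdivlMl //; nra.
have a_s_ge0 : 0 <= 8 / eps * (a (s n) / s n) by rewrite !mulr_ge0 ?invr_ge0 ?ltW //; lra.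
rewrite -EFinM lee_fin.
have -> : (s n)^-1 * (4 * lam n / (eps * s n / a (s n))) =
    lam n / (2 * s n) * (8 / eps * (a (s n) / s n)) by field; rewrite !gt_eqF //; lra.
have -> : C * (a (s n) / s n) = kap^-1 * (8 / eps * (a (s n) / s n)).
  by rewrite /C; field; rewrite !gt_eqF.
exact: ler_wpM2r.
Unshelve. all: by end_near. Qed.

Theorem lemma3p1 (R : realType) (p : nat -> nat -> R) (a : R -> R) (c1 : R)
  (p_ge0 : forall n k, 0 <= p n k)
  (p_sum1 : forall n, (0 < n)%N -> (\esum_(k in [set: nat]) (p n k)%:E = 1)%E)
  (a_ge1 : forall t, 0 <= t -> 1 <= a t)
  (a_sqrt : (fun t => a t / Num.sqrt t) @ +oo --> +oo)
  (a_lin : (fun t => a t / t) @ +oo --> 0)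
  (c1_lim : (fun n => (EF1 p n * (n%:R^-1)%:E)%E) @ \oo --> c1%:E)
  (c1_pos : 0 < c1) (c1_lt1 : c1 < 1) :
  forall lam : nat -> R, (forall n, 0 < lam n) ->
    (fun n => lam n / n%:R) @ \oo --> (1 : R^o) ->
    ((fun L : R => limn_esup (fun n =>
        ((n%:R^-1)%:E *
         \esum_(k in [set k | (n%:R * p n k > L)%R]) (phi (lam n * p n k))%:E)%E))
       @ +oo --> (0%R)%:E)
    /\
    (forall eps : R, 0 < eps ->
      (fun n =>
         let s := fine (sn2 p n) in
         ((s^-1)%:E *
          \esum_(k in [set k | (lam n * p n k > eps * s / a s)%R])
             ((lam n * p n k) ^+ 2 * expR (- (lam n * p n k)))%:E)%E)
      @ \oo --> (0%R)%:E).
Proof.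
move=> lam lam_pos lam_ratio; split; first exact: large_species_cvg0.
move=> eps eps0.
apply: (@lindeberg_cvg0 R p a lam (c1 / (2 * expR 1)) eps) => //.
- by rewrite divr_gt0 ?mulr_gt0 ?expR_gt0.
- exact: cvg_ratio1_le2n.
- exact: sn2_ge_linear.
Qed.
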